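(* Suppose that $Q_ph(x)=M_p(g_{p+1}h)(x)$ for Markov kernels $M_p$ and nonnegative measurable potentials $g_{p+1}$, and that (MG) holds: (i) there are constants $0<\sigma_-<\sigma_+<\infty$ and $\varphi\in\mathcal P(\mathcal X)$ with $\sigma_-\varphi(A)\le M_p(x,A)\le\sigma_+\varphi(A)$ for all $p\ge0$, $x\in\mathsf X$, $A\in\mathcal X$; (ii) $w_+:=\sup_p\|w_p\|_\infty<\infty$; (iii) $c_-:=\inf_{p,x}Q_p\mathbf 1(x)>0$. Let $\rho=1-\sigma_-/\sigma_+$ and, for $n\ge1$ and $h\in\mathrm B(\mathcal X)$, $$\sigma_n^2(h)=\sum_{\ell=0}^{n-1}(n-\ell)\frac{\eta_\ell R_\ell\{w_\ell^2\,[Q_{\ell+1}\cdots Q_{n-1}(h-\eta_nh)]^2\}}{(\eta_\ell Q_\ell\cdots Q_{n-1}\mathbf 1)^2}$$ (the asymptotic variance of the double bootstrap algorithm). Then for all $n\ge1$ and $h\in\mathrm B(\mathcal X)$, $$\sigma_n^2(h)\le w_+\frac{\mathrm{osc}(h)^2}{(1-\rho)^2(1-\rho^2)^2c_-}.$$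
   Context: $(\mathsf X,\mathcal X)$ a measurable space; $\mathrm B(\mathcal X)$ bounded real measurable functions, $\mathcal P(\mathcal X)$ probability measures, $\nu h=\int h\,d\nu$, $\|h\|_\infty=\sup|h|$, $\mathrm{osc}(h)=\sup_{x,x'}|h(x)-h(x')|$, $\mathbf 1$ the constant one. Feynman–Kac flow: $\eta_0\in\mathcal P(\mathcal X)$, $\eta_{p+1}h=\eta_pQ_ph/\eta_pQ_p\mathbf 1$ with $Q_p\mathbf 1$ bounded. $R_p$ are Markov kernels on $\mathsf X$ with $Q_p(x,\cdot)\ll R_p(x,\cdot)$ and $w_p(x,x')=\frac{dQ_p(x,\cdot)}{dR_p(x,\cdot)}(x')$ nonnegative bounded measurable; $R_p(w_p^2f)(x)=\int w_p^2(x,x')f(x')R_p(x,dx')$. Convention: $Q_{\ell+1}\cdots Q_{n-1}=\mathrm{id}$ if $\ell+1>n-1$; kernel products $(KL)(x,A)=\int K(x,dy)L(y,A)$. *)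

From HB Require Import structures.
From mathcomp Require Import all_boot all_order all_algebra.
From mathcomp Require Import all_classical all_reals all_analysis.
Set Implicit Arguments. Unset Strict Implicit. Unset Printing Implicit Defensive.
Import Order.TTheory GRing.Theory Num.Theory.
Local Open Scope classical_set_scope.
Local Open Scope ring_scope.

Section FK.
Context (d : measure_display) (T : measurableType d) (R : realType).

Definition Qop (M : nat -> R.-pker T ~> T) (g : nat -> T -> R) (p : nat)
  (f : T -> R) : T -> R :=
  fun x => Rintegral (M p x) setT (fun y => g p.+1 y * f y).

(* Qcomp M g l k f = Q_l Q_{l+1} ... Q_{l+k-1} f  (identity when k = 0) *)
Fixpoint Qcomp (M : nat -> R.-pker T ~> T) (g : nat -> T -> R) (l k : nat)
  (f : T -> R) : T -> R :=
  match k with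
  | 0%N => f
  | k'.+1 => Qop M g l (Qcomp M g l.+1 k' f)
  end.

Definition mint (nu : probability T R) (h : T -> R) : R := Rintegral nu setT h.

Definition osc (h : T -> R) : R :=
  sup (range (fun xy : T * T => `|h xy.1 - h xy.2|)).

Definition bounded_measurable (h : T -> R) : Prop :=
  measurable_fun setT h /\ exists C : R, forall x, `|h x| <= C.

Definition sigma2 (M : nat -> R.-pker T ~> T) (g : nat -> T -> R)
  (Rk : nat -> R.-pker T ~> T) (w : nat -> T * T -> R)
  (eta : nat -> probability T R) (n : nat) (h : T -> R) : R :=
  \sum_(0 <= l < n)
    (n - l)%:R *
    (mint (eta l) (fun x => Rintegral (Rk l x) setT
        (fun y => (w l (x, y)) ^+ 2 *
           (Qcomp M g l.+1 (n - l.+1) (fun z => h z - mint (eta n) h) y) ^+ 2))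
     / (mint (eta l) (Qcomp M g l (n - l) (fun=> 1))) ^+ 2).

End FK.

From HB Require Import structures.
From mathcomp Require Import all_boot all_order all_algebra.
From mathcomp Require Import all_classical all_reals all_analysis.
From mathcomp Require Import ring lra zify.
Import Order.TTheory GRing.Theory Num.Theory.
Import measurable_realfun.
Local Open Scope classical_set_scope.
Local Open Scope ring_scope.

Set Implicit Arguments. Unset Strict Implicit. Unset Printing Implicit Defensive.

(* Write [u = Q_{l+1} ... Q_{n-1} 1].  The minorization (MG)(i) makes every [Q_p] contract
   ratios by the factor [rho]: if [a u <= v <= (a + W) u] then [a' Q u <= Q v <= (a' + rho W) Q u]
   for some [a'].  Iterating, the ratio [Q_{l+1} ... Q_{n-1} h / u] ranges over an interval of
   length [rho^(n-l-1) osc h]; as [eta_n h] is an [eta_{l+1}]-average of that ratio,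
   [|Q_{l+1} ... Q_{n-1} (h - eta_n h)| <= rho^(n-l-1) osc(h) u].  With [w_l^2 <= w_+ w_l],
   [R_l (w_l f) = Q_l f], [u <= (sigma_+ / sigma_-) eta_{l+1} u] and the flow identity
   [eta_l Q_l ... Q_{n-1} 1 = eta_{l+1} u * eta_l Q_l 1 >= c_- eta_{l+1} u], the [l]-th term of
   [sigma_n^2 h] is at most [(n - l) w_+ rho^(2(n-l-1)) osc(h)^2 / ((1 - rho)^2 c_-)], and
   [sum_k (k + 1) rho^(2k) <= (1 - rho^2)^-2].
   Kernel identities are transferred from indicators to bounded measurable functions by
   approximating from below with staircase functions. *)

Section BoundedMeasurable.
Context {d : measure_display} {T : measurableType d} {R : realType}.
Local Notation bm := (@bounded_measurable d T R).

Lemma bounded_measurable_cst (c : R) : bm (fun=> c).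
Proof. by split; [exact: measurable_cst | exists `|c|]. Qed.

Lemma bounded_measurableD (f h : T -> R) : bm f -> bm h -> bm (fun x => f x + h x).
Proof.
move=> [mf [C1 hC1]] [mh [C2 hC2]]; split.
  exact: measurable_funD.
by exists (C1 + C2) => x; rewrite (le_trans (ler_normD _ _))// lerD.
Qed.

Lemma bounded_measurableM (f h : T -> R) : bm f -> bm h -> bm (fun x => f x * h x).
Proof.
move=> [mf [C1 hC1]] [mh [C2 hC2]]; split.
  exact: measurable_funM.
by exists (C1 * C2) => x; rewrite normrM ler_pM.
Qed.

Lemma bounded_measurableZ (a : R) (f : T -> R) : bm f -> bm (fun x => a * f x).
Proof. exact/bounded_measurableM/bounded_measurable_cst. Qed.

Lemma bounded_measurableB (f h : T -> R) : bm f -> bm h -> bm (fun x => f x - h x).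
Proof.
move=> hf hh; have := bounded_measurableD hf (bounded_measurableZ (-1) hh).
by under eq_fun do rewrite mulN1r.
Qed.

Lemma bounded_measurable_indic (A : set T) : measurable A -> bm (\1_A : T -> R).
Proof.
move=> mA; split; first exact: measurable_indic.
by exists 1 => x; rewrite indicE; case: (x \in A); rewrite ?normr1 ?normr0.
Qed.

Lemma bounded_measurable_shift (f : T -> R) :
  bm f -> exists2 C, bm (fun x => f x + C) & forall x, 0 <= f x + C.
Proof.
move=> hf; have [_ [C hC]] := hf; exists `|C|.
  exact/bounded_measurableD/bounded_measurable_cst.
move=> x; rewrite -lerBlDr sub0r lerNl (le_trans _ (ler_norm C))//.
by rewrite (le_trans _ (hC x))// -normrN ler_norm.
Qed.

Lemma osc_bounds (h : T -> R) : bm h -> exists a, forall y, a <= h y <= a + osc h.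
Proof.
move=> [_ [C hC]].
have hub : has_ubound (range (fun xy : T * T => `|h xy.1 - h xy.2|)).
  exists (C + C) => _ [[y y'] _ <-] /=.
  by rewrite (le_trans (ler_normB _ _))// lerD.
have hlb : has_lbound (range h).
  by exists (- C) => _ [y _ <-]; have := hC y; rewrite ler_norml => /andP[].
exists (inf (range h)) => y; apply/andP; split; first by apply: ge_inf => //; exists y.
rewrite -lerBlDr; apply: lb_le_inf; first by exists (h y), y.
move=> _ [y' _ <-]; rewrite lerBlDr -lerBlDl.
have : `|h y - h y'| <= osc h by apply: ub_le_sup => //; exists (y, y').
by rewrite ler_norml => /andP[].
Qed.

Definition positive_linear (L : (T -> R) -> R) : Prop :=
  [/\ forall f h, bm f -> bm h -> L (fun x => f x + h x) = L f + L h,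
      forall a f, bm f -> L (fun x => a * f x) = a * L f &
      forall f h, bm f -> bm h -> (forall x, f x <= h x) -> L f <= L h].

Section PositiveLinear.
Variable L : (T -> R) -> R.
Hypothesis hL : positive_linear L.

Lemma positive_linear_cst c : L (fun=> c) = c * L (fun=> 1).
Proof.
have [_ hZ _] := hL; rewrite -hZ; last exact: bounded_measurable_cst.
by congr L; apply/funext => x; rewrite mulr1.
Qed.

Lemma positive_linear0 : L (fun=> 0) = 0.
Proof. by rewrite positive_linear_cst mul0r. Qed.

Lemma positive_linearB f h : bm f -> bm h -> L (fun x => f x - h x) = L f - L h.
Proof.
move=> hf hh; have [hD hZ _] := hL.
have -> : L f - L h = L f + (-1) * L h by rewrite mulN1r.
rewrite -hZ// -hD//; last exact: bounded_measurableZ.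
by congr L; apply/funext => x; rewrite mulN1r.
Qed.

Lemma positive_linearB_cst f c : bm f -> L (fun x => f x - c) = L f - c * L (fun=> 1).
Proof.
by move=> hf; rewrite -positive_linear_cst -positive_linearB//; exact: bounded_measurable_cst.
Qed.

Lemma positive_linear_ge0 f : bm f -> (forall x, 0 <= f x) -> 0 <= L f.
Proof.
move=> hf f0; rewrite -positive_linear0; have [_ _ hm] := hL.
exact: hm (bounded_measurable_cst 0) hf f0.
Qed.

Lemma positive_linear_norm f C : bm f -> (forall x, `|f x| <= C) ->
  `|L f| <= C * L (fun=> 1).
Proof.
move=> hf hC; have [_ _ hm] := hL.
have b1 := bounded_measurable_cst C; have b2 := bounded_measurable_cst (- C).
rewrite ler_norml -mulNr -!positive_linear_cst.
by apply/andP; split; apply: hm => // x; have /andP[] : - C <= f x <= C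
  by rewrite -ler_norml.
Qed.

Lemma positive_linearMr c : 0 <= c -> positive_linear (fun f => L f * c).
Proof.
move=> c0; have [hD hZ hm] := hL; split.
- by move=> f h hf hh; rewrite hD// mulrDl.
- by move=> a f hf; rewrite hZ// mulrA.
- by move=> f h hf hh fh; rewrite ler_wpM2r// hm.
Qed.

Lemma positive_linear_comp (Op : (T -> R) -> T -> R) :
  (forall x, positive_linear (fun f => Op f x)) -> (forall f, bm f -> bm (Op f)) ->
  positive_linear (fun f => L (Op f)).
Proof.
move=> hO bO; have [hD hZ hm] := hL; split.
- move=> f h hf hh; rewrite -hD; try exact: bO.
  by congr L; apply/funext => x; have [hDx _ _] := hO x; rewrite hDx.
- move=> a f hf; rewrite -hZ; last exact: bO.
  by congr L; apply/funext => x; have [_ hZx _] := hO x; rewrite hZx.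
- move=> f h hf hh fh; apply: hm; try exact: bO.
  by move=> x; have [_ _ hmx] := hO x; apply: hmx.
Qed.

End PositiveLinear.

Lemma positive_linear_eval x : positive_linear (fun f : T -> R => f x).
Proof. by split. Qed.

(** ** Positive linear functionals are determined by their values on indicators *)

Definition level_set (k : R) (f : T -> R) (j : nat) : set T :=
  [set x | Num.truncn (k * f x) = j].

(* [staircase k f n] is [floor (k f) / k] truncated to the levels below [n]. *)
Definition staircase (k : R) (f : T -> R) (n : nat) (x : T) : R :=
  \sum_(0 <= j < n) (j%:R / k) * \1_(level_set k f j) x.

Lemma staircase0 k f : staircase k f 0 = fun=> 0.
Proof. by apply/funext => x; rewrite /staircase big_geq. Qed.

Lemma staircaseS k f n : staircase k f n.+1 =
  fun x => staircase k f n x + (n%:R / k) * \1_(level_set k f n) x.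
Proof. by apply/funext => x; rewrite /staircase big_nat_recr. Qed.

Lemma staircaseE k f n x : staircase k f n x =
  if (Num.truncn (k * f x) < n)%N then (Num.truncn (k * f x))%:R / k else 0.
Proof.
elim: n => [|n IH]; first by rewrite /staircase big_geq.
rewrite /staircase big_nat_recr//= -/(staircase k f n x) IH indicE.
have -> : (x \in level_set k f n) = (Num.truncn (k * f x) == n).
  by apply/idP/eqP; rewrite inE.
have [->|tn] := eqVneq (Num.truncn (k * f x)) n.
  by rewrite ltnn ltnSn mulr1 add0r.
by rewrite ltnS [in RHS]leq_eqVlt (negbTE tn) mulr0 addr0.
Qed.

Section Staircase.
Variables (k : R) (f : T -> R).
Hypotheses (k0 : 0 < k) (mf : measurable_fun setT f) (f0 : forall x, 0 <= f x).

Lemma measurable_level_set j : measurable (level_set k f j).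
Proof.
have mkf : measurable_fun setT (fun x => k * f x).
  exact: measurable_funM (measurable_cst k) mf.
have := mkf measurableT _ (measurable_itv `[j%:R, j.+1%:R[).
rewrite setTI; congr measurable; apply/seteqP; split => x /=.
  by rewrite in_itv/= => /andP[h1 h2]; apply/eqP; rewrite truncn_eq ?h1 ?h2// mulr_ge0// ltW.
by move=> <-; rewrite in_itv/= truncn_le (mulr_ge0 (ltW k0) (f0 x)) truncnS_gt.
Qed.

Lemma bounded_measurable_staircase n : bm (staircase k f n).
Proof.
elim: n => [|n IH]; first by rewrite staircase0; exact: bounded_measurable_cst.
rewrite staircaseS.
exact/bounded_measurableD/bounded_measurableZ/bounded_measurable_indic/measurable_level_set.
Qed.

Lemma staircase_sandwich n x : (Num.truncn (k * f x) < n)%N ->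
  staircase k f n x <= f x <= staircase k f n x + k^-1.
Proof.
move=> tn; rewrite staircaseE tn.
have /andP[h1 h2] := truncn_itv (mulr_ge0 (ltW k0) (f0 x)).
have -> : (Num.truncn (k * f x))%:R / k + k^-1 = (Num.truncn (k * f x)).+1%:R / k.
  by rewrite -natr1 mulrDl mul1r.
by rewrite ler_pdivrMr// ler_pdivlMr// ![f x * k]mulrC h1 ltW.
Qed.

Lemma positive_linear_le_staircase (L1 L2 : (T -> R) -> R) n :
  positive_linear L1 -> positive_linear L2 ->
  (forall A, measurable A -> L1 (\1_A) <= L2 (\1_A)) ->
  L1 (staircase k f n) <= L2 (staircase k f n).
Proof.
move=> hL1 hL2 hA; elim: n => [|n IH].
  by rewrite staircase0 !positive_linear0.
have [hD1 hZ1 _] := hL1; have [hD2 hZ2 _] := hL2.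
have bi := bounded_measurable_indic (measurable_level_set n).
have bs := bounded_measurable_staircase n.
rewrite staircaseS hD1 ?hD2 ?hZ1 ?hZ2 //; try exact: bounded_measurableZ.
rewrite lerD// ler_wpM2l ?divr_ge0 ?(ltW k0)//.
exact: hA (measurable_level_set n).
Qed.

End Staircase.

Lemma positive_linear_le_indic (L1 L2 : (T -> R) -> R) :
  positive_linear L1 -> positive_linear L2 ->
  (forall A, measurable A -> L1 (\1_A) <= L2 (\1_A)) ->
  forall f, bm f -> (forall x, 0 <= f x) -> L1 f <= L2 f.
Proof.
move=> hL1 hL2 hA f hf f0; have [mf [C hC]] := hf.
have [hD1 hZ1 hm1] := hL1; have [_ _ hm2] := hL2.
have L10 : 0 <= L1 (fun=> 1) by apply: positive_linear_ge0 => //; exact: bounded_measurable_cst.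
have approx k : 0 < k -> L1 f <= L2 f + k^-1 * L1 (fun=> 1).
  move=> k0; set n := (Num.truncn (k * C)).+1.
  have tn x : (Num.truncn (k * f x) < n)%N.
    by rewrite ltnS le_truncn// ler_pM2l// (le_trans (ler_norm _) (hC x)).
  have bs := bounded_measurable_staircase k0 mf f0 n.
  have bsk : bm (fun x => staircase k f n x + k^-1 * 1).
    exact/bounded_measurableD/bounded_measurable_cst.
  apply: (le_trans (hm1 _ _ hf bsk _)).
    by move=> x; rewrite mulr1; have /andP[] := staircase_sandwich k0 f0 (tn x).
  rewrite hD1 //; last exact: bounded_measurable_cst.
  rewrite [L1 (fun=> _ * 1)](positive_linear_cst hL1) mulr1 lerD2r.
  apply: le_trans (positive_linear_le_staircase k0 mf f0 n hL1 hL2 hA) _.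
  by apply: hm2 => // x; have /andP[] := staircase_sandwich k0 f0 (tn x).
apply/ler_addgt0Pr => e e0.
have k0 : 0 < L1 (fun=> 1) / e + 1 by rewrite ltr_wpDl// divr_ge0// ltW.
apply: le_trans (approx _ k0) _; rewrite lerD2l mulrC ler_pdivrMr//.
rewrite mulrDr mulr1 [e * _]mulrC divfK; last exact: lt0r_neq0.
by rewrite lerDl ltW.
Qed.

Lemma positive_linear_eq_indic (L1 L2 : (T -> R) -> R) :
  positive_linear L1 -> positive_linear L2 ->
  (forall A, measurable A -> L1 (\1_A) = L2 (\1_A)) ->
  forall f, bm f -> L1 f = L2 f.
Proof.
move=> hL1 hL2 hA f hf; have [C bfC fC0] := bounded_measurable_shift hf.
have L11 : L1 (fun=> 1) = L2 (fun=> 1).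
  have e1 : (fun=> 1) = (\1_setT : T -> R).
    by apply/funext => x; rewrite indicE in_setT.
  by rewrite e1 hA.
have : L1 (fun x => f x + C) = L2 (fun x => f x + C).
  by apply/le_anti/andP; split; apply: positive_linear_le_indic => // A mA; rewrite hA.
have [hD1 _ _] := hL1; have [hD2 _ _] := hL2.
rewrite hD1 ?hD2 //; try exact: bounded_measurable_cst.
by rewrite (positive_linear_cst hL1 C) (positive_linear_cst hL2 C) L11 => /addIr.
Qed.

End BoundedMeasurable.

Lemma weighted_geometric_sum_le {R : realFieldType} (q : R) n : 0 <= q < 1 ->
  \sum_(0 <= l < n) (n - l)%:R * q ^+ (n - l.+1) <= ((1 - q) ^+ 2)^-1.
Proof.
move=> /andP[q0 q1]; have q1' : 0 < 1 - q by rewrite subr_gt0.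
rewrite big_nat_rev (eq_big_nat _ _ (F2 := fun j => j.+1%:R * q ^+ j)); last first.
  move=> i /andP[_ iN]; have -> : (n - (0 + n - i.+1))%N = i.+1 by lia.
  by have -> : (n - (0 + n - i.+1).+1)%N = i by lia.
(* multiplying by (1 - q)^2 telescopes the sum *)
have id m : (1 - q) ^+ 2 * \sum_(0 <= j < m) j.+1%:R * q ^+ j =
    1 - m.+1%:R * q ^+ m + m%:R * q ^+ m.+1.
  elim: m => [|m IH]; first by rewrite big_geq// mulr0 expr0 mulr1 mul0r addr0 subrr.
  by rewrite big_nat_recr//= mulrDr IH !exprS -[m.+2%:R]natr1 -[m.+1%:R]natr1; ring.
rewrite -(ler_pM2l (exprn_gt0 2 q1')) id mulfV ?gt_eqF ?exprn_gt0//.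
rewrite -addrA gerDl addrC subr_le0.
apply: (@le_trans _ _ (n%:R * q ^+ n)).
  by apply: ler_wpM2l => //; rewrite exprSr ler_piMr ?exprn_ge0// ltW.
by rewrite ler_wpM2r ?exprn_ge0// ler_nat.
Qed.

Section Integrals.
Context {d : measure_display} {T : measurableType d} {R : realType}.
Local Notation bm := (@bounded_measurable d T R).

Lemma ge0_fine_le (e : \bar R) (C : R) : (0 <= e)%E -> (e <= C%:E)%E -> fine e <= C.
Proof. by case: e => [r| |]//= _; rewrite lee_fin. Qed.

Lemma EFin_Rintegral (mu : {measure set T -> \bar R}) (f : T -> R) :
  mu.-integrable setT (EFin \o f) -> (Rintegral mu setT f)%:E = (\int[mu]_y (f y)%:E)%E.
Proof. by move=> mf; rewrite /Rintegral fineK//; exact: integrable_fin_num. Qed.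

Lemma integral_mul_indic (mu : {measure set T -> \bar R}) (G : T -> R) A :
  measurable A -> (\int[mu]_y (G y * \1_A y)%:E = \int[mu]_(y in A) (G y)%:E)%E.
Proof.
move=> mA; rewrite [RHS]integral_mkcond; apply: eq_integral => y _.
by rewrite patchE indicE; case: (y \in A); rewrite ?mulr1 ?mulr0.
Qed.

Lemma integral_bounded_lty (mu : {measure set T -> \bar R}) (G : T -> R) (C : R) :
  (mu setT < +oo)%E -> measurable_fun setT G -> (forall y, 0 <= G y <= C) ->
  (\int[mu]_y (G y)%:E < +oo)%E.
Proof.
move=> muT mG GC; apply: (@le_lt_trans _ _ (\int[mu]_y (cst `|C|%:E) y)%E).
  apply: ge0_le_integral => //.
  - by move=> y _; rewrite lee_fin; have /andP[] := GC y.
  - exact/measurable_EFinP.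
  - by move=> y _; rewrite lee_fin; have /andP[_ GCy] := GC y; exact: le_trans GCy (ler_norm C).
by rewrite integral_cst//= lte_mul_pinfty.
Qed.

Section Density.
Variables (mu : {measure set T -> \bar R}) (G : T -> R).
Hypotheses (G0 : forall y, 0 <= G y) (mG : measurable_fun setT G)
  (iG : (\int[mu]_y (G y)%:E < +oo)%E).

Lemma integrable_density : mu.-integrable setT (EFin \o G).
Proof.
apply/integrableP; split; first exact/measurable_EFinP.
by under eq_integral do rewrite /= ger0_norm//.
Qed.

Lemma integrable_densityM f : bm f -> mu.-integrable setT (EFin \o (fun y => G y * f y)).
Proof.
move=> [mf [C hC]].
apply: (@le_integrable _ _ _ mu setT measurableT _ (fun y => (`|C| * G y)%:E)).
- exact/measurable_EFinP/measurable_funM.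
- move=> y _ /=; rewrite lee_fin normrM (ger0_norm (G0 y)).
  rewrite (ger0_norm (mulr_ge0 (normr_ge0 C) (G0 y))) [X in _ <= X]mulrC.
  by rewrite ler_wpM2l// (le_trans (hC y) (ler_norm _)).
- under eq_fun do rewrite EFinM.
  exact: integrableZl integrable_density.
Qed.

Lemma positive_linear_Rintegral :
  positive_linear (fun f => Rintegral mu setT (fun y => G y * f y)).
Proof.
split.
- move=> f h hf hh; rewrite -RintegralD//; try exact: integrable_densityM.
  by apply: eq_Rintegral => y _; rewrite mulrDr.
- move=> a f hf; rewrite -RintegralZl//; last exact: integrable_densityM.
  by apply: eq_Rintegral => y _; rewrite mulrCA.
- move=> f h hf hh fh; apply: le_Rintegral => //; try exact: integrable_densityM.
  by move=> y _; rewrite ler_wpM2l.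
Qed.

End Density.

Section ComparedMeasures.
Variables (mu nu : {measure set T -> \bar R}) (c : R) (F : T -> \bar R).
Hypotheses (c0 : 0 <= c) (F0 : forall y, (0 <= F y)%E) (mF : measurable_fun setT F).

Lemma ge0_le_integral_minorized : (forall A, measurable A -> c%:E * nu A <= mu A)%E ->
  (c%:E * \int[nu]_y F y <= \int[mu]_y F y)%E.
Proof.
move=> numu; rewrite -(ge0_integral_mscale nu measurableT (NngNum c0))//.
exact: ge0_le_measure_integral.
Qed.

Lemma ge0_le_integral_majorized : (forall A, measurable A -> mu A <= c%:E * nu A)%E ->
  (\int[mu]_y F y <= c%:E * \int[nu]_y F y)%E.
Proof.
move=> munu; rewrite -(ge0_integral_mscale nu measurableT (NngNum c0))//.
exact: ge0_le_measure_integral.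
Qed.

End ComparedMeasures.

End Integrals.

Section FeynmanKac.
Context (d : measure_display) (T : measurableType d) (R : realType)
  (M : nat -> R.-pker T ~> T) (g : nat -> T -> R)
  (Rk : nat -> R.-pker T ~> T) (w : nat -> T * T -> R)
  (eta : nat -> probability T R)
  (phi : probability T R) (sigm sigp wplus cminus : R).
Local Notation bm := (@bounded_measurable d T R).
Hypotheses (mg : forall p, measurable_fun setT (g p))
  (g0 : forall p x, 0 <= g p x)
  (Q1_bounded : forall p, exists C : R, forall x,
      (\int[M p x]_y (g p.+1 y)%:E <= C%:E)%E)
  (mw : forall p, measurable_fun setT (w p))
  (w0 : forall p xy, 0 <= w p xy)
  (w_bounded : forall p, exists C : R, forall xy, w p xy <= C)
  (w_density : forall p x A, measurable A ->
      (\int[M p x]_(y in A) (g p.+1 y)%:E = \int[Rk p x]_(y in A) (w p (x, y))%:E)%E)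
  (eta_flow : forall p A, measurable A ->
      eta p.+1 A = (mint (eta p) (Qop M g p (\1_A)) / mint (eta p) (Qop M g p (fun=> 1)))%:E)
  (sigm_gt0 : 0 < sigm) (sigm_lt : sigm < sigp)
  (M_mixing : forall p x A, measurable A ->
      ((sigm%:E * phi A <= M p x A) /\ (M p x A <= sigp%:E * phi A))%E)
  (w_le : forall p xy, w p xy <= wplus)
  (cminus_gt0 : 0 < cminus)
  (Q1_ge : forall p x, cminus <= Qop M g p (fun=> 1) x).

Local Notation Q := (Qop M g).
Local Notation E p := (mint (eta p)).

Lemma sigp_gt0 : 0 < sigp.
Proof. exact: lt_trans sigm_gt0 sigm_lt. Qed.

Lemma inhabited_T : inhabited T.
Proof.
case: (pselect (inhabited T)) => // noT; exfalso.
have T0 : [set: T] = set0 by apply/seteqP; split => // x _; exact: noT (inhabits x).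
by have := probability_setT phi; rewrite T0 measure0 => /esym/eqP; rewrite eqe oner_eq0.
Qed.

Lemma lty_integral_g p x : (\int[M p x]_y (g p.+1 y)%:E < +oo)%E.
Proof. by have [C hC] := Q1_bounded p; exact: le_lt_trans (hC x) (ltry _). Qed.

Lemma positive_linear_Q p x : positive_linear (fun f => Q p f x).
Proof. exact: positive_linear_Rintegral (g0 p.+1) (mg p.+1) (lty_integral_g p x). Qed.

Lemma measurable_Q_ge0 p f : bm f -> (forall y, 0 <= f y) -> measurable_fun setT (Q p f).
Proof.
move=> [mf _] f0.
have mk : measurable_fun setT (fun y => (g p.+1 y * f y)%:E).
  exact/measurable_EFinP/measurable_funM.
have k0 y : (0 <= (g p.+1 y * f y)%:E)%E by rewrite lee_fin mulr_ge0.
apply: (measurableT_comp (fine_measurable measurableT)).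
exact: measurable_fun_integral_kernel (measurable_kernel (M p)) _ k0 mk.
Qed.

Lemma bounded_measurable_Q p f : bm f -> bm (Q p f).
Proof.
move=> hf; have [C0 hC0] := Q1_bounded p; have [_ [C hC]] := hf.
have [c bfc fc0] := bounded_measurable_shift hf.
split.
  have -> : Q p f = fun x => Q p (fun y => f y + c) x - c * Q p (fun=> 1) x.
    apply/funext => x; have [hD _ _] := positive_linear_Q p x.
    by rewrite hD ?(positive_linear_cst (positive_linear_Q p x) c) ?addrK//;
      exact: bounded_measurable_cst.
  apply: measurable_funB; first exact: measurable_Q_ge0.
  apply: measurable_funM; first exact: measurable_cst.
  exact: measurable_Q_ge0 _ (bounded_measurable_cst 1) (fun=> ler01).
exists (`|C| * C0) => x.
apply: le_trans (positive_linear_norm (positive_linear_Q p x) hf (C := `|C|) _) _.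
  by move=> y; exact: le_trans (hC y) (ler_norm _).
rewrite ler_wpM2l// /Qop /Rintegral; under eq_integral do rewrite mulr1.
by apply: ge0_fine_le (hC0 x); apply: integral_ge0 => y _; rewrite lee_fin.
Qed.

Lemma bounded_measurable_Qcomp l k f : bm f -> bm (Qcomp M g l k f).
Proof. by elim: k l => [|k IH] l hf //=; apply/bounded_measurable_Q/IH. Qed.

Lemma positive_linear_Qcomp l k x : positive_linear (fun f => Qcomp M g l k f x).
Proof.
elim: k l x => [|k IH] l x; first exact: positive_linear_eval.
exact: (@positive_linear_comp _ _ _ _ (positive_linear_Q l x) (Qcomp M g l.+1 k)
  (IH l.+1) (@bounded_measurable_Qcomp l.+1 k)).
Qed.

Lemma Qcomp1_ge l k x : cminus ^+ k <= Qcomp M g l k (fun=> 1) x.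
Proof.
elim: k l x => [|k IH] l x /=; first by rewrite expr0.
have [_ _ hm] := positive_linear_Q l x.
apply: le_trans (hm (fun=> cminus ^+ k) _ _ _ (IH l.+1)); last first.
- exact/bounded_measurable_Qcomp/bounded_measurable_cst.
- exact: bounded_measurable_cst.
rewrite (positive_linear_cst (positive_linear_Q l x)) exprSr.
by rewrite ler_wpM2l ?exprn_ge0 ?(ltW cminus_gt0).
Qed.

Lemma Qcomp1_gt0 l k x : 0 < Qcomp M g l k (fun=> 1) x.
Proof. exact: lt_le_trans (exprn_gt0 _ cminus_gt0) (Qcomp1_ge l k x). Qed.

Lemma positive_linear_mint p : positive_linear (E p).
Proof.
have i1 : (\int[eta p]_y (1:R)%:E < +oo)%E.
  by rewrite integral_cst//= mul1e probability_setT ltry.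
have := positive_linear_Rintegral (fun=> ler01) (measurable_cst _) i1.
by congr positive_linear; apply/funext => f; apply: eq_Rintegral => y _; rewrite mul1r.
Qed.

Lemma mint_cst p c : E p (fun=> c) = c.
Proof.
rewrite /mint Rintegral_cst// (_ : fine _ = 1) ?mulr1//.
exact: (congr1 fine (probability_setT (eta p))).
Qed.

Lemma le_mint p f h : bm f -> bm h -> (forall x, f x <= h x) -> E p f <= E p h.
Proof. by have [_ _ hm] := positive_linear_mint p; exact: hm. Qed.

Lemma mint_Q1_ge p : cminus <= E p (Q p (fun=> 1)).
Proof.
rewrite -{1}(mint_cst p cminus); apply: le_mint (Q1_ge p).
  exact: bounded_measurable_cst.
exact/bounded_measurable_Q/bounded_measurable_cst.
Qed.

Lemma mint_Q1_gt0 p : 0 < E p (Q p (fun=> 1)).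
Proof. exact: lt_le_trans cminus_gt0 (mint_Q1_ge p). Qed.

Lemma mint_Q p f : bm f -> E p (Q p f) = E p.+1 f * E p (Q p (fun=> 1)).
Proof.
apply: (positive_linear_eq_indic (L1 := fun f => E p (Q p f))
  (L2 := fun f => E p.+1 f * E p (Q p (fun=> 1)))).
- exact: (@positive_linear_comp _ _ _ _ (positive_linear_mint p) (Q p)
    (@positive_linear_Q p) (@bounded_measurable_Q p)).
- exact/positive_linearMr/ltW/mint_Q1_gt0/positive_linear_mint.
move=> A mA.
have -> : E p.+1 (\1_A) = fine (eta p.+1 A) by rewrite /mint /Rintegral integral_indic// setIT.
by rewrite eta_flow//= divfK// gt_eqF// mint_Q1_gt0.
Qed.

Lemma mint_Qcomp l k f : bm f ->
  E l (Qcomp M g l k f) = E (l + k)%N f * E l (Qcomp M g l k (fun=> 1)).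
Proof.
elim: k l f => [|k IH] l f hf /=; first by rewrite addn0 mint_cst mulr1.
rewrite mint_Q; last exact: bounded_measurable_Qcomp.
rewrite [in RHS]mint_Q; last exact/bounded_measurable_Qcomp/bounded_measurable_cst.
by rewrite IH// addSnnS mulrA.
Qed.

Definition Qphi (p : nat) (f : T -> R) : R :=
  Rintegral phi setT (fun y => g p.+1 y * f y).

Lemma lty_integral_g_phi p : (\int[phi]_y (g p.+1 y)%:E < +oo)%E.
Proof.
have [x0] := inhabited_T; have [C hC] := Q1_bounded p.
have mgE : measurable_fun setT (fun y => (g p.+1 y)%:E) by exact/measurable_EFinP.
have : (sigm%:E * \int[phi]_y (g p.+1 y)%:E <= C%:E)%E.
  apply: le_trans (hC x0); apply: ge0_le_integral_minorized (ltW sigm_gt0) _ mgE _.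
    by move=> y; rewrite lee_fin.
  by move=> A mA; have [] := M_mixing p x0 mA.
have : (0 <= \int[phi]_y (g p.+1 y)%:E)%E by apply: integral_ge0 => y _; rewrite lee_fin.
case: (\int[phi]_y (g p.+1 y)%:E)%E => [r _ _| |]//; first exact: ltry.
by rewrite mulry gtr0_sg// mul1e leye_eq.
Qed.

Lemma positive_linear_Qphi p : positive_linear (Qphi p).
Proof. exact: positive_linear_Rintegral (g0 p.+1) (mg p.+1) (lty_integral_g_phi p). Qed.

Lemma Q_minorized p f x : bm f -> (forall y, 0 <= f y) ->
  sigm * Qphi p f <= Q p f x <= sigp * Qphi p f.
Proof.
move=> hf f0; have [mf _] := hf.
have iM := integrable_densityM (g0 p.+1) (mg p.+1) (lty_integral_g p x) hf.
have iP := integrable_densityM (g0 p.+1) (mg p.+1) (lty_integral_g_phi p) hf.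
have mk : measurable_fun setT (fun y => (g p.+1 y * f y)%:E).
  exact/measurable_EFinP/measurable_funM.
have k0 y : (0 <= (g p.+1 y * f y)%:E)%E by rewrite lee_fin mulr_ge0.
rewrite -!lee_fin !EFinM /Qop /Qphi !EFin_Rintegral//; apply/andP; split.
  apply: ge0_le_integral_minorized (ltW sigm_gt0) k0 mk _.
  by move=> A mA; have [] := M_mixing p x mA.
apply: ge0_le_integral_majorized (ltW sigp_gt0) k0 mk _.
by move=> A mA; have [] := M_mixing p x mA.
Qed.

Lemma Qcomp1_le_mint l k y :
  Qcomp M g l k (fun=> 1) y <= sigp / sigm * E l (Qcomp M g l k (fun=> 1)).
Proof.
case: k => [|k] /=.
  by rewrite mint_cst mulr1 ler_pdivlMr// mul1r ltW.
set u := Qcomp M g l.+1 k (fun=> 1).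
have bu : bm u by exact/bounded_measurable_Qcomp/bounded_measurable_cst.
have u0 z : 0 <= u z by exact/ltW/Qcomp1_gt0.
have /andP[_ Qu_le] := Q_minorized l y bu u0.
have Qphi_le : sigm * Qphi l u <= E l (Q l u).
  rewrite -(mint_cst l (sigm * Qphi l u)); apply: le_mint.
  - exact: bounded_measurable_cst.
  - exact: bounded_measurable_Q.
  by move=> z; have /andP[] := Q_minorized l z bu u0.
apply: le_trans Qu_le _.
have -> : sigp * Qphi l u = sigp / sigm * (sigm * Qphi l u) by rewrite mulrA divfK// gt_eqF.
by rewrite ler_wpM2l// divr_ge0// ltW// sigp_gt0.
Qed.

Lemma bounded_measurable_w p x : bm (fun y => w p (x, y)).
Proof.
split; first exact: measurableT_comp (mw p) (pair1_measurable x).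
by have [C hC] := w_bounded p; exists C => y; rewrite ger0_norm.
Qed.

Lemma positive_linear_Rk p x :
  positive_linear (fun f => Rintegral (Rk p x) setT (fun y => w p (x, y) * f y)).
Proof.
have [mwx _] := bounded_measurable_w p x; have [C hC] := w_bounded p.
have iw : (\int[Rk p x]_y (w p (x, y))%:E < +oo)%E.
  apply: (integral_bounded_lty (C := C) _ mwx) => [|y]; first by rewrite prob_kernel ltry.
  by rewrite w0 hC.
exact: positive_linear_Rintegral (fun y => w0 p (x, y)) mwx iw.
Qed.

Lemma Rk_density p x F : bm F ->
  Rintegral (Rk p x) setT (fun y => w p (x, y) * F y) = Q p F x.
Proof.
move=> hF; apply: (positive_linear_eq_indic (positive_linear_Rk p x) (positive_linear_Q p x)) hF.
move=> A mA; rewrite /Qop /Rintegral; congr fine.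
by rewrite !integral_mul_indic// w_density.
Qed.

Lemma Rk_w2_le p x F : bm F ->
  Rintegral (Rk p x) setT (fun y => w p (x, y) ^+ 2 * F y ^+ 2)
    <= wplus * Q p (fun y => F y ^+ 2) x.
Proof.
move=> hF; have bF2 : bm (fun y => F y ^+ 2) by exact: bounded_measurableM.
have [_ hZ hm] := positive_linear_Rk p x.
rewrite -Rk_density// -hZ//.
under eq_Rintegral do rewrite expr2 -mulrA.
have bw := bounded_measurable_w p x.
apply: hm => [||y]; first exact: bounded_measurableM bw bF2.
  exact: bounded_measurableZ.
by rewrite ler_wpM2r ?sqr_ge0 ?w_le.
Qed.

Lemma bounded_measurable_Rk_w2 p F : bm F ->
  bm (fun x => Rintegral (Rk p x) setT (fun y => w p (x, y) ^+ 2 * F y ^+ 2)).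
Proof.
move=> hF; have [mF [CF hCF]] := hF; have [C hC] := w_bounded p.
have k0 xy : (0 <= (w p xy ^+ 2 * F xy.2 ^+ 2)%:E)%E by rewrite lee_fin mulr_ge0 ?sqr_ge0.
have mk : measurable_fun setT (fun xy : T * T => (w p xy ^+ 2 * F xy.2 ^+ 2)%:E).
  apply/measurable_EFinP/measurable_funM; first exact: measurable_funM.
  by apply: measurable_funM; exact: measurableT_comp mF measurable_snd.
split.
  apply: (measurableT_comp (fine_measurable measurableT)).
  exact: measurable_fun_integral_finite_kernel _ (Rk p) k0 mk.
exists (C ^+ 2 * CF ^+ 2) => x.
have [mwx _] := bounded_measurable_w p x.
rewrite ger0_norm; last by apply: Rintegral_ge0 => y _; rewrite mulr_ge0 ?sqr_ge0.
apply: ge0_fine_le; first by apply: integral_ge0 => y _; rewrite lee_fin mulr_ge0 ?sqr_ge0.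
apply: (@le_trans _ _ (\int[Rk p x]_y (cst (C ^+ 2 * CF ^+ 2)%:E) y)%E).
  apply: ge0_le_integral => //.
  - by apply/measurable_EFinP/measurable_funM; [exact: measurable_funM|exact: measurable_funM].
  - move=> y _; rewrite lee_fin /=; apply: ler_pM; rewrite ?sqr_ge0//.
      by rewrite ler_sqr ?nnegrE// (le_trans (w0 p (x, y)) (hC _)).
    rewrite -real_normK ?num_real// ler_sqr ?nnegrE//.
    exact: le_trans (normr_ge0 _) (hCF y).
by rewrite integral_cst//= prob_kernel mule1.
Qed.

(** ** Contraction of the ratios [Q v / Q u] *)

Definition rho := 1 - sigm / sigp.

Lemma one_sub_rho : 1 - rho = sigm / sigp.
Proof. by rewrite /rho opprB addrCA subrr addr0. Qed.

Lemma rho_ge0 : 0 <= rho.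
Proof. by rewrite /rho subr_ge0 ler_pdivrMr ?sigp_gt0// mul1r ltW. Qed.

Lemma sigm_gt0_div : 0 < sigm / sigp.
Proof. by rewrite divr_gt0// sigp_gt0. Qed.

Lemma rho_lt1 : rho < 1.
Proof. by rewrite -subr_gt0 one_sub_rho sigm_gt0_div. Qed.

Lemma Q_ge_ratio p u H x : bm u -> bm H -> (forall y, 0 <= u y) -> (forall y, 0 <= H y) ->
  0 < Qphi p u -> sigm / sigp * (Qphi p H / Qphi p u) * Q p u x <= Q p H x.
Proof.
move=> bu bH u0 H0 Pu.
have /andP[QH _] := Q_minorized p x bH H0.
have /andP[_ Qu] := Q_minorized p x bu u0.
have PH := positive_linear_ge0 (positive_linear_Qphi p) bH H0.
have nu0 : 0 <= sigm / sigp * (Qphi p H / Qphi p u).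
  exact: mulr_ge0 (ltW sigm_gt0_div) (divr_ge0 PH (ltW Pu)).
apply: le_trans (ler_wpM2l nu0 Qu) (le_trans _ QH).
have -> : sigm / sigp * (Qphi p H / Qphi p u) * (sigp * Qphi p u) = sigm * Qphi p H.
  by field; rewrite !gt_eqF// sigp_gt0.
by [].
Qed.

(* With [H = v - a u] and [J = (a + W) u - v], both nonnegative, (MG)(i) gives
   [Q H >= (sigm / sigp) nu Q u] and [Q J >= (sigm / sigp) (W - nu) Q u]
   for [nu = Qphi H / Qphi u]. *)
Lemma Q_ratio_contract p u v a W b : bm u -> bm v -> 0 < b -> (forall y, b <= u y) ->
  (forall y, a * u y <= v y <= (a + W) * u y) ->
  exists a', forall x, a' * Q p u x <= Q p v x <= (a' + rho * W) * Q p u x.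
Proof.
move=> bu bv b0 bu0 huv.
have u0 y : 0 <= u y by exact: le_trans (ltW b0) (bu0 y).
pose H y := v y - a * u y; pose J y := (a + W) * u y - v y.
have bH : bm H by apply: bounded_measurableB bv _; exact: bounded_measurableZ.
have bJ : bm J by apply: bounded_measurableB _ bv; exact: bounded_measurableZ.
have H0 y : 0 <= H y by rewrite subr_ge0; have /andP[] := huv y.
have J0 y : 0 <= J y by rewrite subr_ge0; have /andP[] := huv y.
have Pu_gt0 : 0 < Qphi p u.
  have [x0] := inhabited_T; have /andP[_ Qu_le] := Q_minorized p x0 bu u0.
  rewrite -(pmulr_rgt0 _ sigp_gt0); apply: lt_le_trans Qu_le.
  have [_ _ hm] := positive_linear_Q p x0.
  apply: (@lt_le_trans _ _ (b * Q p (fun=> 1) x0)).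
    by rewrite mulr_gt0// (lt_le_trans cminus_gt0).
  rewrite -(positive_linear_cst (positive_linear_Q p x0)).
  by apply: hm => //; exact: bounded_measurable_cst.
pose nu := Qphi p H / Qphi p u.
have PJu : Qphi p J / Qphi p u = W - nu.
  have [_ hZ _] := positive_linear_Qphi p.
  have -> : Qphi p J = W * Qphi p u - Qphi p H.
    rewrite -hZ// -(positive_linearB (positive_linear_Qphi p)) //; last exact: bounded_measurableZ.
    by congr (Qphi p); apply/funext => y; rewrite /J /H; ring.
  by rewrite /nu; field; rewrite gt_eqF.
exists (a + sigm / sigp * nu) => x; have [hD hZ _] := positive_linear_Q p x.
have QvE : Q p v x = a * Q p u x + Q p H x.
  rewrite -hZ// -hD//; last exact: bounded_measurableZ.
  by congr (Q p _ x); apply/funext => y; rewrite /H addrC subrK.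
have QJE : Q p J x = (a + W) * Q p u x - Q p v x.
  by rewrite -hZ// -(positive_linearB (positive_linear_Q p x))//; exact: bounded_measurableZ.
apply/andP; split; first by rewrite QvE mulrDl lerD2l; exact: Q_ge_ratio.
have -> : (a + sigm / sigp * nu + rho * W) * Q p u x =
    (a + W) * Q p u x - sigm / sigp * (W - nu) * Q p u x by rewrite /rho; ring.
rewrite lerBrDr addrC -lerBrDr -QJE -PJu; exact: Q_ge_ratio.
Qed.

Lemma Qcomp_ratio_contract k l f a W : bm f -> (forall y, a <= f y <= a + W) ->
  exists a', forall x,
    a' * Qcomp M g l k (fun=> 1) x <= Qcomp M g l k f x <=
    (a' + rho ^+ k * W) * Qcomp M g l k (fun=> 1) x.
Proof.
elim: k l => [|k IH] l hf hfa.
  by exists a => x /=; rewrite !mulr1 expr0 mul1r; exact: hfa.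
have [a' ha'] := IH l.+1 hf hfa.
have b1 : bm (fun=> 1) := bounded_measurable_cst 1.
have [a2 h2] := Q_ratio_contract l (bounded_measurable_Qcomp l.+1 k b1)
  (bounded_measurable_Qcomp l.+1 k hf) (exprn_gt0 k cminus_gt0) (@Qcomp1_ge l.+1 k) ha'.
by exists a2 => x /=; rewrite exprS -mulrA; exact: h2.
Qed.

Lemma wplus_ge0 : 0 <= wplus.
Proof. by have [x0] := inhabited_T; exact: le_trans (w0 0 (x0, x0)) (w_le 0 (x0, x0)). Qed.

Lemma mint_Qcomp1_gt0 l k : 0 < E l (Qcomp M g l k (fun=> 1)).
Proof.
apply: lt_le_trans (exprn_gt0 k cminus_gt0) _.
rewrite -(mint_cst l (cminus ^+ k)); apply: le_mint (@Qcomp1_ge l k).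
  exact: bounded_measurable_cst.
exact/bounded_measurable_Qcomp/bounded_measurable_cst.
Qed.

Lemma Qcomp_centered_le l k h a W y : bm h -> (forall z, a <= h z <= a + W) ->
  `|Qcomp M g l.+1 k (fun z => h z - E (l.+1 + k)%N h) y|
    <= rho ^+ k * W * Qcomp M g l.+1 k (fun=> 1) y.
Proof.
move=> hh hha; set c := E (l.+1 + k)%N h; set u := Qcomp M g l.+1 k (fun=> 1).
have u0 z : 0 <= u z by exact/ltW/Qcomp1_gt0.
have [a' ha'] := Qcomp_ratio_contract k l.+1 hh hha.
have -> : Qcomp M g l.+1 k (fun z => h z - c) y = Qcomp M g l.+1 k h y - c * u y.
  by have := positive_linearB_cst (positive_linear_Qcomp l.+1 k y) c hh.
(* [c] is the [eta_(l+1)]-average of the ratio [Qcomp h / u], hence lies in the same interval *)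
have /andP[c_ge c_le] : a' <= c <= a' + rho ^+ k * W.
  have Eu := mint_Qcomp1_gt0 l.+1 k; have [_ hZ _] := positive_linear_mint l.+1.
  have bu : bm u by exact/bounded_measurable_Qcomp/bounded_measurable_cst.
  have cE : c * E l.+1 u = E l.+1 (Qcomp M g l.+1 k h) by rewrite mint_Qcomp.
  have bQh : bm (Qcomp M g l.+1 k h) by exact: bounded_measurable_Qcomp.
  apply/andP; split; rewrite -(ler_pM2r Eu) cE -hZ //; apply: le_mint;
    try exact: bounded_measurableZ; try exact: bQh; by move=> z; have /andP[] := ha' z.
have /andP[v_ge v_le] := ha' y.
have c_ge' := ler_wpM2r (u0 y) c_ge; have c_le' := ler_wpM2r (u0 y) c_le.
rewrite mulrDl in v_le c_le'; move: v_ge v_le c_ge' c_le'.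
move: (a' * u y) (rho ^+ k * W * u y) (c * u y) (Qcomp M g l.+1 k h y) => A D C' V.
by rewrite ler_norml => *; apply/andP; split; lra.
Qed.

Lemma mint_Rk_w2_le l F B : bm F -> (forall y, F y ^+ 2 <= B) ->
  E l (fun x => Rintegral (Rk l x) setT (fun y => w l (x, y) ^+ 2 * F y ^+ 2))
    <= wplus * B * E l (Q l (fun=> 1)).
Proof.
move=> bF FB; have bF2 : bm (fun y => F y ^+ 2) by exact: bounded_measurableM.
apply: le_trans (@le_mint l _ (fun x => wplus * Q l (fun y => F y ^+ 2) x) _ _
  (fun x => Rk_w2_le l x bF)) _.
- exact: bounded_measurable_Rk_w2.
- exact/bounded_measurableZ/bounded_measurable_Q.
have [_ hZ _] := positive_linear_mint l.
rewrite hZ; last exact: bounded_measurable_Q.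
rewrite mint_Q// -mulrA ler_wpM2l ?wplus_ge0// ler_wpM2r ?(ltW (mint_Q1_gt0 l))//.
by rewrite -(mint_cst l.+1 B); apply: le_mint => //; exact: bounded_measurable_cst.
Qed.

Lemma variance_term_le l k h a W : bm h -> (forall y, a <= h y <= a + W) ->
  E l (fun x => Rintegral (Rk l x) setT (fun y => w l (x, y) ^+ 2 *
        (Qcomp M g l.+1 k (fun z => h z - E (l.+1 + k)%N h) y) ^+ 2))
    / (E l (Qcomp M g l k.+1 (fun=> 1))) ^+ 2
  <= wplus * (rho ^+ k * W) ^+ 2 / ((1 - rho) ^+ 2 * cminus).
Proof.
move=> hh hha.
set F := Qcomp M g l.+1 k _; set u := Qcomp M g l.+1 k (fun=> 1).
set Eu := E l.+1 u; set Z := E l (Q l (fun=> 1)).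
have bF : bm F.
  by apply/bounded_measurable_Qcomp/bounded_measurableB => //; exact: bounded_measurable_cst.
have W0 : 0 <= W.
  have [x0] := inhabited_T; have /andP[h1 h2] := hha x0.
  by rewrite -(lerD2l a) addr0 (le_trans h1 h2).
set B := rho ^+ k * W * (sigp / sigm * Eu).
have B0 : 0 <= B.
  apply: mulr_ge0; first exact: mulr_ge0 (exprn_ge0 k rho_ge0) W0.
  exact: mulr_ge0 (ltW (divr_gt0 sigp_gt0 sigm_gt0)) (ltW (mint_Qcomp1_gt0 _ _)).
have F2_le y : F y ^+ 2 <= B ^+ 2.
  rewrite -real_normK ?num_real// ler_sqr ?nnegrE//.
  apply: le_trans (Qcomp_centered_le l k y hh hha) _.
  rewrite /B ler_wpM2l ?(mulr_ge0 (exprn_ge0 k rho_ge0) W0)//.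
  exact: Qcomp1_le_mint.
have -> : E l (Qcomp M g l k.+1 (fun=> 1)) = Eu * Z.
  by rewrite [LHS]/= mint_Q //; exact/bounded_measurable_Qcomp/bounded_measurable_cst.
have D0 : 0 <= ((Eu * Z) ^+ 2)^-1 by rewrite invr_ge0 sqr_ge0.
apply: le_trans (ler_wpM2r D0 (mint_Rk_w2_le l bF F2_le)) _.
have Z0 := mint_Q1_gt0 l; have Eu0 : 0 < Eu := mint_Qcomp1_gt0 l.+1 k.
have -> : wplus * B ^+ 2 * Z / (Eu * Z) ^+ 2 =
    wplus * (rho ^+ k * W) ^+ 2 / ((1 - rho) ^+ 2 * Z).
  by rewrite one_sub_rho /B; field; rewrite !gt_eqF// sigp_gt0.
have r0 : 0 < (1 - rho) ^+ 2 by rewrite exprn_gt0// subr_gt0 rho_lt1.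
rewrite ler_wpM2l ?(mulr_ge0 wplus_ge0 (sqr_ge0 _))// lef_pV2 ?posrE /Z.
- by rewrite ler_pM2l// mint_Q1_ge.
- exact: mulr_gt0.
- exact: mulr_gt0.
Qed.

Lemma sigma2_le n h : bm h ->
  sigma2 M g Rk w eta n h <=
    wplus * osc h ^+ 2 / ((1 - rho) ^+ 2 * (1 - rho ^+ 2) ^+ 2 * cminus).
Proof.
move=> hh; have [a ha] := osc_bounds hh.
set K := wplus * osc h ^+ 2 / ((1 - rho) ^+ 2 * cminus).
have K0 : 0 <= K.
  exact: divr_ge0 (mulr_ge0 wplus_ge0 (sqr_ge0 _)) (mulr_ge0 (sqr_ge0 _) (ltW cminus_gt0)).
have q01 : 0 <= rho ^+ 2 < 1 by rewrite sqr_ge0 exprn_ilt1 ?rho_ge0 ?rho_lt1.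
apply: (@le_trans _ _ (\sum_(0 <= l < n) (n - l)%:R * (rho ^+ 2) ^+ (n - l.+1) * K)).
  rewrite /sigma2; apply: ler_sum_nat => l /andP[_ ln]; rewrite -mulrA ler_wpM2l//.
  have nE : n = (l.+1 + (n - l.+1))%N by lia.
  have -> : (n - l)%N = (n - l.+1).+1 by lia.
  rewrite [X in mint (eta X) h]nE.
  have -> : (rho ^+ 2) ^+ (n - l.+1) * K =
      wplus * (rho ^+ (n - l.+1) * osc h) ^+ 2 / ((1 - rho) ^+ 2 * cminus).
    by rewrite /K -exprM mulnC exprM exprMn; ring.
  exact: variance_term_le.
have r1 : 1 - rho != 0 by rewrite subr_eq0 eq_sym lt_eqF// rho_lt1.
have r2 : 1 - rho ^+ 2 != 0 by have /andP[_ ?] := q01; rewrite subr_eq0 eq_sym lt_eqF.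
rewrite -big_distrl /=; apply: le_trans (ler_wpM2r K0 (weighted_geometric_sum_le n q01)) _.
by rewrite /K le_eqVlt; apply/orP; left; apply/eqP; field; rewrite r1 r2 gt_eqF.
Qed.

End FeynmanKac.

Theorem mainTheorem14 (d : measure_display) (T : measurableType d) (R : realType)
  (M : nat -> R.-pker T ~> T) (g : nat -> T -> R)
  (Rk : nat -> R.-pker T ~> T) (w : nat -> T * T -> R)
  (eta : nat -> probability T R)
  (phi : probability T R) (sigm sigp wplus cminus : R) :
  (forall p, measurable_fun setT (g p)) ->
  (forall p x, 0 <= g p x) ->
  (forall p, exists C : R, forall x,
      (\int[M p x]_y (g p.+1 y)%:E <= C%:E)%E) ->
  (forall p, measurable_fun setT (w p)) ->
  (forall p xy, 0 <= w p xy) ->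
  (forall p, exists C : R, forall xy, w p xy <= C) ->
  (forall p x A, measurable A ->
      (\int[M p x]_(y in A) (g p.+1 y)%:E = \int[Rk p x]_(y in A) (w p (x, y))%:E)%E) ->
  (forall p A, measurable A ->
      eta p.+1 A = (mint (eta p) (Qop M g p (\1_A)) / mint (eta p) (Qop M g p (fun=> 1)))%:E) ->
  (* (MG)(i) *)
  0 < sigm -> sigm < sigp ->
  (forall p x A, measurable A ->
      ((sigm%:E * phi A <= M p x A) /\ (M p x A <= sigp%:E * phi A))%E) ->
  (* (MG)(ii) *)
  (forall p xy, w p xy <= wplus) ->
  (* (MG)(iii) *)
  0 < cminus ->
  (forall p x, cminus <= Qop M g p (fun=> 1) x) ->
  forall (n : nat) (h : T -> R), (1 <= n)%N -> bounded_measurable h ->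
  let rho := 1 - sigm / sigp in
  sigma2 M g Rk w eta n h <=
    wplus * osc h ^+ 2 / ((1 - rho) ^+ 2 * (1 - rho ^+ 2) ^+ 2 * cminus).
Proof.
move=> mg g0 gC mw w0 wC dens flow sigm_gt0 sigm_lt mix w_le cminus_gt0 cm n h _ hh.
exact: (sigma2_le mg g0 gC mw w0 wC dens flow sigm_gt0 sigm_lt mix w_le cminus_gt0 cm n hh).
Qed.
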